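(* Let $\eta>0$, $\beta\in[0,1)$ and $\lambda_i$ with $\eta\lambda_i>0$, and let ${\mathcal{M}}_i:\mathbb{S}^2\to\mathbb{S}^2$, ${\mathcal{M}}_i({\bm{X}}):={\bm{A}}_i{\bm{X}}{\bm{A}}_i^\top+\eta^2\lambda_i^2({\bm{X}})_{11}{\bm{Q}}$, where ${\bm{A}}_i=\begin{bmatrix}1-\eta\lambda_i&-\beta\\ \eta\lambda_i&\beta\end{bmatrix}$ and ${\bm{Q}}=\begin{bmatrix}1&-1\\-1&1\end{bmatrix}$. For any $c>0$, if $\rho(c{\mathcal{M}}_i)\ge1$, then for every $\alpha>0$ there is no ${\bm{W}}\succeq0$ (${\bm{W}}\in\mathbb{S}^2$) with $(\mathrm{Id}-c{\mathcal{M}}_i)({\bm{W}})\succeq\alpha{\bm{Q}}$.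
   Context: $\mathbb{S}^2$ denotes the space of real symmetric $2\times2$ matrices; $\succeq$ is the Loewner order; $\rho(\cdot)$ denotes spectral radius and $\mathrm{Id}$ the identity map. *)

From HB Require Import structures.
From mathcomp Require Import all_boot all_order all_algebra.
From mathcomp Require Import complex.
Import ComplexField ComplexField.Normc.
Set Implicit Arguments. Unset Strict Implicit. Unset Printing Implicit Defensive.
Import Order.TTheory GRing.Theory Num.Theory.
Local Open Scope ring_scope.

Section Defs.
Variable R : rcfType.

Definition mx2 (a b c d : R) : 'M[R]_2 :=
  \matrix_(i < 2, j < 2)
    if (i : nat) == 0%N then (if (j : nat) == 0%N then a else b)
    else (if (j : nat) == 0%N then c else d).

Definition psd (X : 'M[R]_2) : Prop :=
  X^T = X /\ forall v : 'cV[R]_2, 0 <= (v^T *m X *m v) 0 0.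

Definition loewner_ge (X Y : 'M[R]_2) : Prop := psd (X - Y).

(* coordinates of a symmetric 2x2 matrix in the basis E11, E12+E21, E22 of S^2 *)
Definition vecS (X : 'M[R]_2) : 'cV[R]_3 :=
  \col_(k < 3)
    if (k : nat) == 0%N then X 0 0 else if (k : nat) == 1%N then X 0 1 else X 1 1.
Definition matS (v : 'cV[R]_3) : 'M[R]_2 :=
  \matrix_(i < 2, j < 2) v (inord (i + j)) 0.

Definition opmx (f : 'M[R]_2 -> 'M[R]_2) : 'M[R]_3 :=
  \matrix_(k < 3, l < 3) vecS (f (matS (delta_mx l 0))) k 0.

Definition spectral_radius n (A : 'M[R]_n) : R :=
  \big[Num.max/0]_(z <- sval (closed_field_poly_normal
                           (char_poly (map_mx (fun x : R => x%:C%C) A))))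
    normc z.

Definition op_spectral_radius (f : 'M[R]_2 -> 'M[R]_2) : R :=
  spectral_radius (opmx f).

Definition Qmx : 'M[R]_2 := mx2 1 (-1) (-1) 1.
Definition Amx (eta beta lam : R) : 'M[R]_2 :=
  mx2 (1 - eta * lam) (- beta) (eta * lam) beta.
Definition Mop (eta beta lam : R) (X : 'M[R]_2) : 'M[R]_2 :=
  Amx eta beta lam *m X *m (Amx eta beta lam)^T
  + (eta ^+ 2 * lam ^+ 2 * X 0 0) *: Qmx.

End Defs.

From HB Require Import structures.
From mathcomp Require Import all_boot all_order all_algebra.
From mathcomp Require Import complex.
From mathcomp Require Import ring lra.
Import Order.TTheory GRing.Theory Num.Theory.
Import ComplexField ComplexField.Normc.
Set Implicit Arguments. Unset Strict Implicit. Unset Printing Implicit Defensive.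
Local Open Scope ring_scope.

(* Write c M as the completely positive map Phi X = K1 X K1^T + K2 X K2^T with
   K1 = sqrt c A and K2 = sqrt c eta lam [1 0; -1 0].  A feasible W satisfies
   the Lyapunov inequality Phi W + alpha Q <= W, and since Q + c A Q A^T is
   positive definite, so is W.  If Phi had an eigenvalue xi + i ze of modulus
   at least 1, with eigenvector p + i q, the Kadison-Schwarz inequality
   Phi(X)^T W^-1 Phi(X) <= Phi(X^T W^-1 X), which holds because Phi W <= W,
   would make P = p W^-1 p + q W^-1 q a nonzero psd matrix with P <= Phi P.
   For the least t with P <= t W, the singular matrix t W - P then satisfies
   the Lyapunov inequality with constant t alpha; it would be positive definite
   unless t = 0, and t = 0 forces P = 0. *)

Section BilinearForms.
Variables (R : realFieldType) (n : nat).
Implicit Types (X Y W : 'M[R]_n) (u v : 'cV[R]_n).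

Definition bform X u v : R := (u^T *m X *m v) 0 0.
Definition qform X v : R := bform X v v.

Lemma bform_tr X u v : bform X^T u v = bform X v u.
Proof.
rewrite /bform.
have -> : u^T *m X^T *m v = (v^T *m X *m u)^T by rewrite !trmx_mul trmxK mulmxA.
by rewrite mxE.
Qed.

Lemma bform_sym X u v : X^T = X -> bform X u v = bform X v u.
Proof. by move=> X_sym; rewrite -bform_tr X_sym. Qed.

Lemma bformDl X u1 u2 v : bform X (u1 + u2) v = bform X u1 v + bform X u2 v.
Proof. by rewrite /bform linearD !mulmxDl mxE. Qed.

Lemma bformZl X a u v : bform X (a *: u) v = a * bform X u v.
Proof. by rewrite /bform linearZ /= -!scalemxAl mxE. Qed.

Lemma bformDr X u v1 v2 : bform X u (v1 + v2) = bform X u v1 + bform X u v2.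
Proof. by rewrite /bform mulmxDr mxE. Qed.

Lemma bformZr X a u v : bform X u (a *: v) = a * bform X u v.
Proof. by rewrite /bform -scalemxAr mxE. Qed.

Lemma qformD X u v : X^T = X ->
  qform X (u + v) = qform X u + 2 * bform X u v + qform X v.
Proof.
move=> X_sym; rewrite /qform bformDl !bformDr (bform_sym v u X_sym); ring.
Qed.

Lemma qformZ X a v : qform X (a *: v) = a ^+ 2 * qform X v.
Proof. by rewrite /qform bformZl bformZr mulrA -expr2. Qed.

Lemma bform0m u v : bform 0 u v = 0.
Proof. by rewrite /bform mulmx0 mul0mx mxE. Qed.

Lemma qform0 X : qform X 0 = 0.
Proof. by rewrite /qform /bform mulmx0 mxE. Qed.

Lemma bformDm X Y u v : bform (X + Y) u v = bform X u v + bform Y u v.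
Proof. by rewrite /bform mulmxDr mulmxDl mxE. Qed.

Lemma bformBm X Y u v : bform (X - Y) u v = bform X u v - bform Y u v.
Proof. by rewrite /bform mulmxBr mulmxBl !mxE. Qed.

Lemma bformZm a X u v : bform (a *: X) u v = a * bform X u v.
Proof. by rewrite /bform -scalemxAr -scalemxAl mxE. Qed.

Lemma bformMl X Y u v : bform (X *m Y) u v = bform Y (X^T *m u) v.
Proof. by rewrite /bform trmx_mul trmxK !mulmxA. Qed.

Lemma bformMr X Y u v : bform (X *m Y) u v = bform X u (Y *m v).
Proof. by rewrite /bform !mulmxA. Qed.

Lemma qform_conj X M v : qform (M^T *m X *m M) v = qform X (M *m v).
Proof. by rewrite /qform -mulmxA bformMl trmxK bformMr. Qed.

Lemma bform_delta X i j : bform X (delta_mx i 0) (delta_mx j 0) = X i j.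
Proof. by rewrite /bform trmx_delta -rowE -colE !mxE. Qed.

Lemma qform_eq0 X : X^T = X -> (forall v, qform X v = 0) -> X = 0.
Proof.
move=> X_sym X_0; apply/matrixP => i j; rewrite -bform_delta mxE.
have /eqP := X_0 (delta_mx i 0 + delta_mx j 0).
by rewrite qformD // !X_0 add0r addr0 mulf_eq0 pnatr_eq0 => /eqP.
Qed.

Definition posdef W := forall v, v != 0 -> 0 < qform W v.

Lemma posdef_ge0 W : posdef W -> forall v, 0 <= qform W v.
Proof. by move=> W_pos v; have [->|/W_pos/ltW//] := eqVneq v 0; rewrite qform0. Qed.

Lemma posdef_unitmx W : W^T = W -> posdef W -> W \in unitmx.
Proof.
move=> W_sym W_pos; rewrite -row_free_unit -kermx_eq0.
apply/eqP/row_matrixP => i; rewrite row0; set r := row i (kermx W).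
have Wr0 : W *m r^T = 0 by rewrite -[W]W_sym -trmx_mul -row_mul mulmx_ker row0 trmx0.
apply/eqP; rewrite -trmx_eq0; apply: contraT => /W_pos.
by rewrite /qform /bform -mulmxA Wr0 mulmx0 mxE ltxx.
Qed.

End BilinearForms.

Section KrausMaps.
Variables (R : realFieldType) (n : nat) (Ks : seq 'M[R]_n).
Implicit Types (X Y W : 'M[R]_n) (u v : 'cV[R]_n).

Definition kraus X := \sum_(K <- Ks) K *m X *m K^T.

Fact kraus_is_semilinear : semilinear kraus.
Proof.
split=> [a X|X Y]; rewrite /kraus ?scaler_sumr -?big_split /=;
  by apply: eq_bigr => K _; rewrite (scalemxAl, mulmxDr) (scalemxAr, mulmxDl).
Qed.

HB.instance Definition _ :=
  GRing.isSemilinear.Build R 'M[R]_n 'M[R]_n _ kraus kraus_is_semilinear.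

Lemma bform_kraus X u v :
  bform (kraus X) u v = \sum_(K <- Ks) bform X (K^T *m u) (K^T *m v).
Proof.
rewrite /kraus (big_morph (fun Y => bform Y u v) (fun Y Z => bformDm Y Z u v)
  (bform0m u v)).
by apply: eq_bigr => K _; rewrite bformMr bformMl.
Qed.

Lemma kraus_tr X : (kraus X)^T = kraus X^T.
Proof.
rewrite /kraus raddf_sum /=.
by apply: eq_bigr => K _; rewrite !trmx_mul trmxK mulmxA.
Qed.

Lemma qform_kraus_ge0 X v : (forall u, 0 <= qform X u) -> 0 <= qform (kraus X) v.
Proof.
by move=> X_ge0; rewrite /qform bform_kraus sumr_ge0 // => K _; apply: X_ge0.
Qed.

End KrausMaps.

Section KadisonSchwarz.
Variables (R : realFieldType) (n : nat) (W : 'M[R]_n).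
Hypotheses (W_sym : W^T = W) (W_ge0 : forall v, 0 <= qform W v)
  (W_unit : W \in unitmx).
Implicit Types (X : 'M[R]_n) (u v : 'cV[R]_n).

Lemma invmx_sym : (invmx W)^T = invmx W.
Proof. by rewrite trmx_inv W_sym. Qed.

Lemma young_qform X u v :
  2 * bform X u v - qform W u <= qform (X^T *m invmx W *m X) v.
Proof.
set z := invmx W *m X *m v.
have Wz_X : W *m (invmx W *m X) = X by rewrite mulmxA mulmxV // mul1mx.
have : 0 <= qform W (u - z) := W_ge0 _.
rewrite -scaleN1r qformD // qformZ bformZr.
have -> : bform W u z = bform X u v by rewrite -bformMr Wz_X.
have -> : qform W z = qform (X^T *m invmx W *m X) v.
  rewrite /qform -bformMr Wz_X /z -[invmx W *m X]trmxK -bformMl.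
  by rewrite trmx_mul invmx_sym.
lra.
Qed.

Variable Ks : seq 'M[R]_n.
Hypothesis kraus_W_le : forall v, qform (kraus Ks W) v <= qform W v.

Lemma kadison_schwarz X v :
  qform ((kraus Ks X)^T *m invmx W *m kraus Ks X) v
  <= qform (kraus Ks (X^T *m invmx W *m X)) v.
Proof.
(* qform W^-1 h = 2 y.h - qform W y for y = W^-1 h; then use kraus W <= W and
   bound each Kraus term by young_qform. *)
set Y := kraus Ks X; set y := invmx W *m Y *m v.
have WyY : W *m (invmx W *m Y) = Y by rewrite mulmxA mulmxV // mul1mx.
have bformE : bform Y y v = qform (Y^T *m invmx W *m Y) v.
  by rewrite /qform /y -[invmx W *m Y]trmxK -bformMl trmx_mul invmx_sym.
have qformE : qform W y = qform (Y^T *m invmx W *m Y) v.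
  by rewrite /qform -bformMr WyY bformE.
apply: le_trans (_ : 2 * bform Y y v - qform (kraus Ks W) y <= _).
  by have := kraus_W_le y; rewrite bformE qformE; lra.
rewrite /qform /Y !bform_kraus mulr_sumr -sumrB.
by apply: ler_sum => K _; apply: young_qform.
Qed.

End KadisonSchwarz.

Section EigenpairGram.
Variables (R : realFieldType) (n : nat) (W : 'M[R]_n) (Ks : seq 'M[R]_n).
Hypotheses (W_sym : W^T = W) (W_pos : posdef W)
  (kraus_W_le : forall v, qform (kraus Ks W) v <= qform W v).
Implicit Types (p q : 'M[R]_n) (v : 'cV[R]_n).

Definition gram p := p^T *m invmx W *m p.

Let W_unit : W \in unitmx. Proof. exact: posdef_unitmx. Qed.

Lemma qform_invmx v : qform (invmx W) v = qform W (invmx W *m v).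
Proof. by rewrite -qform_conj invmx_sym // mulVmx // mul1mx. Qed.

Lemma qform_gram p v : qform (gram p) v = qform (invmx W) (p *m v).
Proof. exact: qform_conj. Qed.

Lemma gram_tr p : (gram p)^T = gram p.
Proof. by rewrite /gram !trmx_mul trmxK invmx_sym // mulmxA. Qed.

Lemma qform_gram_ge0 p v : 0 <= qform (gram p) v.
Proof. by rewrite qform_gram qform_invmx posdef_ge0. Qed.

Lemma gram_eq0 p : (forall v, qform (gram p) v = 0) -> p = 0.
Proof.
move=> gp0; apply/matrixP => i j; pose e : 'cV[R]_n := delta_mx j 0.
have : invmx W *m (p *m e) = 0.
  apply/eqP; apply: contraT => /W_pos.
  by rewrite -qform_invmx -qform_gram gp0 ltxx.
move=> /(congr1 (mulmx W)); rewrite mulmxA mulmxV // mul1mx mulmx0 -colE.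
by move=> /matrixP/(_ i 0); rewrite !mxE.
Qed.

Lemma gram_add_eq0 p q : gram p + gram q = 0 -> p = 0 /\ q = 0.
Proof.
move=> pq0; have qform0 v : qform (gram p) v + qform (gram q) v = 0.
  by rewrite /qform -bformDm pq0 bform0m.
split; apply: gram_eq0 => v; have := qform0 v;
  have := qform_gram_ge0 p v; have := qform_gram_ge0 q v; lra.
Qed.

Lemma gram_subinvariant p q xi ze :
  kraus Ks p = xi *: p - ze *: q -> kraus Ks q = ze *: p + xi *: q ->
  1 <= xi ^+ 2 + ze ^+ 2 ->
  forall v, qform (gram p + gram q) v <= qform (kraus Ks (gram p + gram q)) v.
Proof.
move=> Kp Kq rad1 v; rewrite linearD /qform !bformDm -!/(qform _ v).
have KS := kadison_schwarz W_sym (posdef_ge0 W_pos) W_unit kraus_W_le.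
apply: le_trans (lerD (KS p v) (KS q v)).
rewrite Kp Kq -!/(gram _) !qform_gram !mulmxDl mulNmx -!scalemxAl.
set a := p *m v; set b := q *m v.
have Wi_sym := invmx_sym W_sym.
rewrite -scaleNr !qformD // !qformZ !bformZl !bformZr (bform_sym a b Wi_sym).
(* the cross terms cancel, leaving (xi^2 + ze^2) times the left-hand side *)
have := qform_gram_ge0 p v; have := qform_gram_ge0 q v; rewrite !qform_gram -/a -/b.
nra.
Qed.

End EigenpairGram.

Lemma sym2E (T : Type) (X : 'M[T]_2) : X^T = X -> X 1 0 = X 0 1.
Proof. by move=> /matrixP/(_ 0 1); rewrite mxE. Qed.

Section TwoByTwo.
Variable R : realFieldType.
Implicit Types (X W : 'M[R]_2) (v : 'cV[R]_2) (x y : R).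

Definition cv2 x y : 'cV[R]_2 := \col_(i < 2) if (i : nat) == 0%N then x else y.

Lemma cv2_eq0 x y : (cv2 x y == 0) = (x == 0) && (y == 0).
Proof.
apply/eqP/andP => [/matrixP v0|[/eqP-> /eqP->]].
  by split; apply/eqP; [have := v0 0 0 | have := v0 1 0]; rewrite !mxE.
by apply/matrixP => i j; rewrite !mxE; case: ifP.
Qed.

Lemma cv2K v : cv2 (v 0 0) (v 1 0) = v.
Proof.
apply/matrixP => i j; rewrite (ord1 j) mxE.
by case: i => [[|[|//]] ?]; congr (v _ _); apply: val_inj.
Qed.

Lemma cv2_neq0 v : v != 0 -> (v 0 0 != 0) || (v 1 0 != 0).
Proof. by rewrite -[v in v != 0]cv2K cv2_eq0 negb_and. Qed.

Lemma mulmx_cv2 (M : 'M[R]_2) v :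
  M *m v = cv2 (M 0 0 * v 0 0 + M 0 1 * v 1 0) (M 1 0 * v 0 0 + M 1 1 * v 1 0).
Proof.
apply/matrixP => i j; rewrite (ord1 j) !mxE !big_ord_recl big_ord0 addr0.
have lift01 : lift ord0 ord0 = 1 :> 'I_2 by apply: val_inj.
case: i => [[|[|//]]] i_lt; rewrite /= lift01;
  by congr (M _ _ * _ + M _ _ * _); apply: val_inj.
Qed.

Lemma qform2E X v : qform X v =
  X 0 0 * v 0 0 ^+ 2 + (X 0 1 + X 1 0) * v 0 0 * v 1 0 + X 1 1 * v 1 0 ^+ 2.
Proof.
have lift01 : lift ord0 ord0 = 1 :> 'I_2 by apply: val_inj.
rewrite /qform /bform !mxE !big_ord_recl !big_ord0 !mxE !big_ord_recl !big_ord0.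
by rewrite !mxE lift01; ring.
Qed.

Lemma qform2_ge0 X : X 1 0 = X 0 1 -> 0 <= X 0 0 -> 0 <= X 1 1 ->
  X 0 1 ^+ 2 <= X 0 0 * X 1 1 -> forall v, 0 <= qform X v.
Proof.
move=> X_sym X00_ge0 X11_ge0 det_ge0 v; rewrite qform2E X_sym.
set x := v 0 0; set y := v 1 0.
have [X00_0|X00_neq0] := eqVneq (X 0 0) 0.
  have X01_0 : X 0 1 = 0.
    apply/eqP; rewrite -sqrf_eq0 eq_le sqr_ge0 andbT.
    by rewrite -(mul0r (X 1 1)) -X00_0.
  rewrite X00_0 X01_0 !(mul0r, addr0, add0r).
  by apply: mulr_ge0 => //; apply: sqr_ge0.
have X00_gt0 : 0 < X 0 0 by rewrite lt0r X00_neq0.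
rewrite -(pmulr_rge0 _ X00_gt0).
have -> : X 0 0 * (X 0 0 * x ^+ 2 + (X 0 1 + X 0 1) * x * y + X 1 1 * y ^+ 2)
  = (X 0 0 * x + X 0 1 * y) ^+ 2 + (X 0 0 * X 1 1 - X 0 1 ^+ 2) * y ^+ 2 by ring.
by rewrite addr_ge0 ?sqr_ge0 // mulr_ge0 ?sqr_ge0 // subr_ge0.
Qed.

Lemma qform2_isotropic X : X 1 0 = X 0 1 -> X 0 1 ^+ 2 = X 0 0 * X 1 1 ->
  exists2 v, v != 0 & qform X v = 0.
Proof.
move=> X_sym det0; have [X00_0|X00_neq0] := eqVneq (X 0 0) 0.
  exists (cv2 1 0); first by rewrite cv2_eq0 oner_eq0.
  by rewrite qform2E !mxE /= X00_0; ring.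
exists (cv2 (- X 0 1) (X 0 0)); first by rewrite cv2_eq0 (negbTE X00_neq0) andbF.
by rewrite qform2E !mxE /= X_sym; apply/eqP; rewrite -subr_eq0; apply/eqP; nra.
Qed.

Lemma posdef2 W : W 1 0 = W 0 1 -> posdef W ->
  0 < W 0 0 /\ 0 < W 0 0 * W 1 1 - W 0 1 ^+ 2.
Proof.
move=> W_sym W_pos.
have W00_gt0 : 0 < W 0 0.
  have := W_pos (cv2 1 0); rewrite cv2_eq0 oner_eq0 qform2E !mxE /=.
  by move=> /(_ isT); lra.
split=> //; have := W_pos (cv2 (W 0 1) (- W 0 0)).
rewrite cv2_eq0 oppr_eq0 (gt_eqF W00_gt0) andbF qform2E !mxE /= W_sym.
by move=> /(_ isT); nra.
Qed.

End TwoByTwo.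

Lemma pencil_root (R : rcfType) (w1 w2 w3 p1 p2 p3 : R) :
  0 < w1 -> 0 < w1 * w3 - w2 ^+ 2 -> exists t, [/\ p1 <= t * w1, p3 <= t * w3
    & (t * w2 - p2) ^+ 2 = (t * w1 - p1) * (t * w3 - p3)].
Proof.
move=> w1_gt0 d_gt0.
have w3_gt0 : 0 < w3 by have := sqr_ge0 w2; nra.
set d := w1 * w3 - w2 ^+ 2 in d_gt0 *.
set m := w1 * p3 + w3 * p1 - 2 * w2 * p2.
set D := m ^+ 2 - 4 * d * (p1 * p3 - p2 ^+ 2).
have D1 : w1 ^+ 2 * D = (2 * d * p1 - m * w1) ^+ 2 + 4 * d * (p1 * w2 - p2 * w1) ^+ 2.
  by rewrite /D /m /d; ring.
have D3 : w3 ^+ 2 * D = (2 * d * p3 - m * w3) ^+ 2 + 4 * d * (p3 * w2 - p2 * w3) ^+ 2.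
  by rewrite /D /m /d; ring.
have D_ge0 : 0 <= D.
  rewrite -(pmulr_rge0 _ (exprn_gt0 2 w1_gt0)) D1.
  by rewrite addr_ge0 ?sqr_ge0 // mulr_ge0 ?sqr_ge0 // mulr_ge0 // ltW.
set s := Num.sqrt D; have s_ge0 : 0 <= s := sqrtr_ge0 D.
have s2 : s ^+ 2 = D := sqr_sqrtr D_ge0.
(* the larger root of det (t W - P) = d t^2 - m t + det P *)
exists ((m + s) / (2 * d)).
set t := (m + s) / (2 * d).
have dt : 2 * d * t = m + s by rewrite /t mulrC divfK // mulf_neq0 // gt_eqF.
have diag_ge0 w p : 0 <= w -> (2 * d * p - m * w) ^+ 2 <= (w * s) ^+ 2 -> p <= t * w.
  move=> w_ge0 bound; have ws_ge0 : 0 <= w * s by apply: mulr_ge0.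
  have : 2 * d * p - m * w <= w * s by nra.
  have : 2 * d * (t * w - p) = w * (m + s) - 2 * d * p by rewrite -dt; ring.
  nra.
split.
- apply: diag_ge0; first exact: ltW.
  by rewrite exprMn s2 D1 lerDl mulr_ge0 ?sqr_ge0 // mulr_ge0 // ltW.
- apply: diag_ge0; first exact: ltW.
  by rewrite exprMn s2 D3 lerDl mulr_ge0 ?sqr_ge0 // mulr_ge0 // ltW.
- have : 4 * d * ((t * w2 - p2) ^+ 2 - (t * w1 - p1) * (t * w3 - p3))
    = D - (2 * d * t - m) ^+ 2 by rewrite /D /m /d; ring.
  rewrite dt [m + s]addrC addrK s2 subrr => /eqP.
  rewrite mulf_eq0 subr_eq0 mulf_eq0 (gt_eqF d_gt0) orbF => /orP[|/eqP //].
  by rewrite pnatr_eq0.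
Qed.

Lemma singular_pencil (R : rcfType) (W P : 'M[R]_2) :
  W^T = W -> posdef W -> P^T = P -> exists t,
    (forall v, 0 <= qform (t *: W - P) v) /\
    exists2 x, x != 0 & qform (t *: W - P) x = 0.
Proof.
move=> /sym2E W_sym W_pos /sym2E P_sym.
have [W00_gt0 det_gt0] := posdef2 W_sym W_pos.
have [t [Z00_ge0 Z11_ge0 Z_det]] := pencil_root (P 0 0) (P 0 1) (P 1 1) W00_gt0 det_gt0.
have ZE i j : (t *: W - P) i j = t * W i j - P i j by rewrite !mxE.
have Z_sym : (t *: W - P) 1 0 = (t *: W - P) 0 1 by rewrite !ZE W_sym P_sym.
exists t; split.
  by apply: qform2_ge0; rewrite // !ZE ?subr_ge0 // Z_det.
by apply: qform2_isotropic; rewrite // !ZE.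
Qed.

Section MomentOperator.
Variables (R : rcfType) (eta beta lam c : R).
Hypothesis c_gt0 : 0 < c.
Local Notation a := (eta * lam).
Local Notation A := (Amx eta beta lam).

Definition Bmx : 'M[R]_2 := mx2 a 0 (- a) 0.

Definition moment_kraus : seq 'M[R]_2 := [:: Num.sqrt c *: A; Num.sqrt c *: Bmx].

Local Notation Phi := (kraus moment_kraus).

Lemma Bmx_conj X : Bmx *m X *m Bmx^T = (eta ^+ 2 * lam ^+ 2 * X 0 0) *: Qmx R.
Proof.
apply/matrixP => i j; rewrite !mxE !big_ord_recl !big_ord0 !mxE !big_ord_recl !big_ord0.
rewrite /= !mxE /=.
by case: i j => [[|[|//]] ?] [[|[|//]] ?] /=; ring.
Qed.

Lemma Mop_kraus X : c *: Mop eta beta lam X = Phi X.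
Proof.
rewrite /kraus !big_cons big_nil addr0 /Mop -Bmx_conj !linearZ /=.
by rewrite -!scalemxAl !scalerA -expr2 sqr_sqrtr ?ltW // scalerDr.
Qed.

Lemma qform_moment_kraus X v :
  qform (Phi X) v = c * (qform X (A^T *m v) + qform X (Bmx^T *m v)).
Proof.
rewrite /qform bform_kraus !big_cons big_nil addr0 !linearZ /= -!scalemxAl.
by rewrite -!/(qform _ _) !qformZ sqr_sqrtr ?ltW // mulrDr.
Qed.

Lemma Amx_tr_mul v :
  A^T *m v = cv2 ((1 - a) * v 0 0 + a * v 1 0) (beta * (v 1 0 - v 0 0)).
Proof. by rewrite mulmx_cv2 !mxE /=; congr cv2; ring. Qed.

Lemma qform_Qmx v : qform (Qmx R) v = (v 0 0 - v 1 0) ^+ 2.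
Proof. by rewrite qform2E !mxE /=; ring. Qed.

Definition dissipative (alpha : R) X :=
  forall v, qform (Phi X) v + alpha * qform (Qmx R) v <= qform X v.

Lemma dissipative_posdef alpha X : 0 < alpha ->
  (forall v, 0 <= qform X v) -> dissipative alpha X -> posdef X.
Proof.
move=> alpha_gt0 X_ge0 X_diss v v_neq0.
have QX u : alpha * qform (Qmx R) u <= qform X u.
  by have := X_diss u; have := qform_kraus_ge0 moment_kraus u X_ge0; lra.
have := X_diss v; have := QX (A^T *m v); have := X_ge0 (Bmx^T *m v).
rewrite qform_moment_kraus Amx_tr_mul !qform_Qmx !mxE /=.
set g := (1 - a) * v 0 0 + a * v 1 0 - beta * (v 1 0 - v 0 0).
have pos : 0 < (v 0 0 - v 1 0) ^+ 2 + c * g ^+ 2.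
  have [v_eq|v_neq] := eqVneq (v 0 0) (v 1 0).
    have v0_neq0 : v 0 0 != 0 by have := cv2_neq0 v_neq0; rewrite -v_eq orbb.
    have -> : g = v 0 0 by rewrite /g v_eq; ring.
    by rewrite v_eq subrr expr0n add0r mulr_gt0 // exprn_even_gt0 // -v_eq.
  have : 0 < (v 0 0 - v 1 0) ^+ 2 by rewrite exprn_even_gt0 // subr_eq0.
  have : 0 <= c * g ^+ 2 by rewrite mulr_ge0 ?sqr_ge0 ?ltW.
  lra.
move=> /(mulr_ge0 (ltW c_gt0)) cqB_ge0 /(ler_wpM2l (ltW c_gt0)) cqA_ge.
have := mulr_gt0 alpha_gt0 pos; lra.
Qed.

Lemma loewner_dissipative alpha W :
  loewner_ge (W - c *: Mop eta beta lam W) (alpha *: Qmx R) -> dissipative alpha W.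
Proof.
move=> [_ W_diss] v.
have : 0 <= qform (W - c *: Mop eta beta lam W - alpha *: Qmx R) v := W_diss v.
by rewrite Mop_kraus /qform !bformBm bformZm -!/(qform _ v); lra.
Qed.

Lemma no_subinvariant alpha W P : 0 < alpha -> W^T = W -> posdef W ->
  dissipative alpha W -> psd P -> (forall v, qform P v <= qform (Phi P) v) ->
  P = 0.
Proof.
move=> alpha_gt0 W_sym W_pos W_diss [P_sym P_ge0] P_sub.
have {}P_ge0 v : 0 <= qform P v := P_ge0 v.
have [t [Z_ge0 [x x_neq0 Zx0]]] := singular_pencil W_sym W_pos P_sym.
have qform_pencil M v : qform (t *: W - M) v = t * qform W v - qform M v.
  by rewrite /qform bformBm bformZm.
have t_ge0 : 0 <= t.
  have [W00_gt0 _] := posdef2 (sym2E W_sym) W_pos.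
  have := Z_ge0 (cv2 1 0); have := P_ge0 (cv2 1 0).
  rewrite qform_pencil !qform2E !mxE /= => P00_ge0 Z00_ge0.
  by rewrite -(pmulr_lge0 _ W00_gt0); lra.
have [t0|t_neq0] := eqVneq t 0.
  apply: (qform_eq0 P_sym) => v; apply/eqP; rewrite eq_le P_ge0 andbT.
  by have := Z_ge0 v; rewrite qform_pencil t0 mul0r; lra.
have Z_diss : dissipative (t * alpha) (t *: W - P).
  move=> v; rewrite linearB linearZ /= /qform bformBm bformZm -!/(qform _ v).
  rewrite qform_pencil.
  have := ler_wpM2l t_ge0 (W_diss v); have := P_sub v; lra.
have t_gt0 : 0 < t by rewrite lt0r t_neq0.
have := dissipative_posdef (mulr_gt0 t_gt0 alpha_gt0) Z_ge0 Z_diss x_neq0.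
by rewrite Zx0 ltxx.
Qed.

Lemma unit_eigenpair_eq0 alpha W p q xi ze : 0 < alpha -> W^T = W ->
  (forall v, 0 <= qform W v) -> dissipative alpha W ->
  Phi p = xi *: p - ze *: q -> Phi q = ze *: p + xi *: q ->
  1 <= xi ^+ 2 + ze ^+ 2 -> p = 0 /\ q = 0.
Proof.
move=> alpha_gt0 W_sym W_ge0 W_diss Phi_p Phi_q rad_ge1.
have W_pos := dissipative_posdef alpha_gt0 W_ge0 W_diss.
have Phi_W_le v : qform (Phi W) v <= qform W v.
  by have := W_diss v; rewrite qform_Qmx; have := sqr_ge0 (v 0 0 - v 1 0); nra.
have P_psd : psd (gram W p + gram W q).
  split; first by rewrite linearD /= !gram_tr.
  move=> v; have := addr_ge0 (qform_gram_ge0 W_sym W_pos p v)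
    (qform_gram_ge0 W_sym W_pos q v).
  by rewrite /qform -bformDm.
apply: (gram_add_eq0 W_sym W_pos).
apply: (no_subinvariant alpha_gt0 W_sym W_pos W_diss P_psd).
exact: (gram_subinvariant W_sym W_pos Phi_W_le Phi_p Phi_q rad_ge1).
Qed.

End MomentOperator.

Lemma char_poly_trmx (F : fieldType) n (A : 'M[F]_n) : char_poly A^T = char_poly A.
Proof.
rewrite /char_poly -det_tr; congr (\det _); apply/matrixP => i j.
by rewrite !mxE eq_sym.
Qed.

Section RealPartsOfEigenvectors.
Variables (R : rcfType) (n : nat) (M : 'M[R]_n).
Local Notation MC := (map_mx (fun x : R => x%:C%C) M).

Lemma ReD (x y : R[i]) : complex.Re (x + y) = complex.Re x + complex.Re y.
Proof. by case: x => a b; case: y => c d; simpc. Qed.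

Lemma ImD (x y : R[i]) : complex.Im (x + y) = complex.Im x + complex.Im y.
Proof. by case: x => a b; case: y => c d; simpc. Qed.

Lemma Re_row_mulmx (v : 'rV[R[i]]_n) i :
  complex.Re ((v *m MC^T) 0 i) = (M *m (map_mx (@complex.Re R) v)^T) i 0.
Proof.
rewrite !mxE (big_morph (@complex.Re R) ReD (erefl _)); apply: eq_bigr => j _.
by rewrite !mxE; case: (v 0 j) => a b /=; ring.
Qed.

Lemma Im_row_mulmx (v : 'rV[R[i]]_n) i :
  complex.Im ((v *m MC^T) 0 i) = (M *m (map_mx (@complex.Im R) v)^T) i 0.
Proof.
rewrite !mxE (big_morph (@complex.Im R) ImD (erefl _)); apply: eq_bigr => j _.
by rewrite !mxE; case: (v 0 j) => a b /=; ring.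
Qed.

Lemma root_char_poly_real_eigenpair z : root (char_poly MC) z ->
  exists p q : 'cV[R]_n, [/\ (p != 0) || (q != 0),
    M *m p = complex.Re z *: p - complex.Im z *: q
  & M *m q = complex.Im z *: p + complex.Re z *: q].
Proof.
rewrite -char_poly_trmx -eigenvalue_root_char => /eigenvalueP[v vM v_neq0].
exists (map_mx (@complex.Re R) v)^T, (map_mx (@complex.Im R) v)^T; split.
- apply: contraNT v_neq0; rewrite negb_or !negbK !trmx_eq0.
  move=> /andP[/eqP/matrixP Re0 /eqP/matrixP Im0]; apply/eqP/matrixP => i j.
  by have := Re0 i j; have := Im0 i j; rewrite !mxE; case: (v i j) => a b /= -> ->.
- apply/matrixP => i j; rewrite (ord1 j) -Re_row_mulmx vM !mxE.
  by case: z {vM} => a b; case: (v 0 i) => c d /=; ring.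
- apply/matrixP => i j; rewrite (ord1 j) -Im_row_mulmx vM !mxE.
  by case: z {vM} => a b; case: (v 0 i) => c d /=; ring.
Qed.

End RealPartsOfEigenvectors.

Lemma bigmax_ge_seq (d : Order.disp_t) (T : orderType d) (I : eqType) (s : seq I)
    (F : I -> T) (x0 x : T) :
  (x0 < x)%O -> (x <= \big[Order.max/x0]_(i <- s) F i)%O ->
  exists2 i, i \in s & (x <= F i)%O.
Proof.
move=> x0_lt_x; elim: s => [|y s IH].
  by rewrite big_nil => /(lt_le_trans x0_lt_x); rewrite ltxx.
rewrite big_cons le_max => /orP[x_le_Fy|/IH[i i_in x_le_Fi]].
  by exists y; rewrite ?mem_head.
by exists i; rewrite // in_cons i_in orbT.
Qed.

Lemma normc_ge1 (R : rcfType) (z : R[i]) :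
  1 <= normc z -> 1 <= complex.Re z ^+ 2 + complex.Im z ^+ 2.
Proof. by case: z => a b /=; rewrite -{1}sqrtr1 ler_sqrt // addr_ge0 ?sqr_ge0. Qed.

Lemma spectral_radius_ge1_eigenpair (R : rcfType) n (M : 'M[R]_n) :
  1 <= spectral_radius M -> exists p q : 'cV[R]_n, exists xi ze : R,
    [/\ (p != 0) || (q != 0), M *m p = xi *: p - ze *: q,
        M *m q = ze *: p + xi *: q & 1 <= xi ^+ 2 + ze ^+ 2].
Proof.
rewrite /spectral_radius; case: closed_field_poly_normal => s /= charE.
move=> /(bigmax_ge_seq ltr01)[z z_in z_ge1].
have : root (char_poly (map_mx (fun x : R => x%:C%C) M)) z.
  by rewrite charE (monicP (char_poly_monic _)) scale1r root_prod_XsubC.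
move=> /root_char_poly_real_eigenpair[p [q [pq_neq0 Mp Mq]]].
by exists p, q, (complex.Re z), (complex.Im z); split=> //; apply: normc_ge1.
Qed.

Section SymmetricCoordinates.
Variable R : rcfType.
Implicit Types (X : 'M[R]_2) (u : 'cV[R]_3).

Fact matS_is_semilinear : semilinear (@matS R).
Proof. by split=> [a u|u w]; apply/matrixP => i j; rewrite !mxE. Qed.

HB.instance Definition _ :=
  GRing.isSemilinear.Build R 'cV[R]_3 'M[R]_2 _ (@matS R) matS_is_semilinear.

Fact vecS_is_semilinear : semilinear (@vecS R).
Proof.
by split=> [a X|X Y]; apply/matrixP => k j; rewrite !mxE; case: ifP => //; case: ifP.
Qed.

HB.instance Definition _ :=
  GRing.isSemilinear.Build R 'M[R]_2 'cV[R]_3 _ (@vecS R) vecS_is_semilinear.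

Lemma matS_tr u : (matS u)^T = matS u.
Proof. by apply/matrixP => i j; rewrite !mxE addnC. Qed.

Lemma vecS_matS u : vecS (matS u) = u.
Proof.
apply/matrixP => k j; rewrite (ord1 j) !mxE.
by case: k => [[|[|[|//]]] ?]; congr (u _ _); apply: val_inj; rewrite /= inordK.
Qed.

Lemma matS_vecS X : X^T = X -> matS (vecS X) = X.
Proof.
move=> /matrixP X_sym; apply/matrixP => i j; rewrite !mxE.
case: i j => [[|[|//]] ?] [[|[|//]] ?]; rewrite /= ?inordK //=;
  [| | rewrite -X_sym mxE |]; congr (X _ _); exact: val_inj.
Qed.

Lemma opmx_mulmx (f : {linear 'M[R]_2 -> 'M[R]_2}) u :
  opmx f *m u = vecS (f (matS u)).
Proof.
rewrite [in RHS](matrix_sum_delta u) !linear_sum /=.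
apply/matrixP => k j; rewrite (ord1 j) !mxE summxE; apply: eq_bigr => l _.
by rewrite big_ord1 !linearZ /= !mxE mulrC.
Qed.

Lemma eq_opmx (f g : 'M[R]_2 -> 'M[R]_2) : f =1 g -> opmx f = opmx g.
Proof. by move=> fg; apply/matrixP => k l; rewrite !mxE fg. Qed.

Lemma matS_opmx_mulmx (f : {linear 'M[R]_2 -> 'M[R]_2}) u :
  (forall X, X^T = X -> (f X)^T = f X) -> matS (opmx f *m u) = f (matS u).
Proof. by move=> f_sym; rewrite opmx_mulmx matS_vecS // f_sym // matS_tr. Qed.

End SymmetricCoordinates.

Theorem lemmaA4 (R : rcfType) (eta beta lam c : R) :
  0 < eta -> 0 <= beta -> beta < 1 -> 0 < eta * lam -> 0 < c ->
  1 <= op_spectral_radius (fun X => c *: Mop eta beta lam X) ->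
  forall alpha : R, 0 < alpha ->
  ~ (exists W : 'M[R]_2,
        W^T = W /\ psd W /\
        loewner_ge (W - c *: Mop eta beta lam W) (alpha *: Qmx R)).
Proof.
move=> _ _ _ _ c_gt0 rho_ge1 alpha alpha_gt0 [W [W_sym [[_ W_ge0] W_diss]]].
set Phi := kraus (moment_kraus eta beta lam c).
have Phi_matS u : Phi (matS u) = matS (opmx Phi *m u).
  by rewrite matS_opmx_mulmx // => X X_sym; rewrite kraus_tr X_sym.
move: rho_ge1; rewrite /op_spectral_radius (eq_opmx (Mop_kraus eta beta lam c_gt0)).
move=> /spectral_radius_ge1_eigenpair[p [q [xi [ze [pq_neq0 Mp Mq rad_ge1]]]]].
have [p0 q0] : matS p = 0 /\ matS q = 0.
  apply: (unit_eigenpair_eq0 c_gt0 alpha_gt0 W_sym W_ge0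
    (loewner_dissipative c_gt0 W_diss) _ _ rad_ge1).
  - by rewrite -/Phi Phi_matS Mp linearB !linearZ.
  - by rewrite -/Phi Phi_matS Mq linearD !linearZ.
by move: pq_neq0; rewrite -(vecS_matS p) -(vecS_matS q) p0 q0 linear0 eqxx.
Qed.
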